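(* Let $n$ be a positive integer. (a) For every positive integer $c$ with $c\leq \max_{k\in\mathbb{Z}_{>0}}\bigl(2^k n-(k+2^k-2)2^k-1\bigr)$, there is an arithmetical structure $(r_1,\dots,r_n)$ on $K_n$ with $r_1=c$. (b) For every prime number $p$ with $p\leq \max_{k\in\mathbb{Z}_{>0}}\bigl(2^k n-(k+2^k-3)2^k-3\bigr)$, there is an arithmetical structure $(r_1,\dots,r_n)$ on $K_n$ with $r_1=p$.
   Context: An arithmetical structure on the complete graph $K_n$ is an $n$-tuple $(r_1,r_2,\dots,r_n)$ of positive integers with $\gcd(r_1,\dots,r_n)=1$ such that $r_j$ divides $\sum_{i=1}^n r_i$ for every $j$. The entries are always listed so that $r_1\geq r_2\geq\dots\geq r_n$; thus $r_1$ is the largest value of the structure. *)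

From mathcomp Require Import all_boot all_order all_algebra.
Set Implicit Arguments. Unset Strict Implicit. Unset Printing Implicit Defensive.

Definition arith_struct_Kn (n : nat) (r : seq nat) : Prop :=
  [/\ size r = n,
      all (fun x => 0 < x) r,
      sorted geq r,
      foldr gcdn 0 r = 1
    & all (fun x => x %| sumn r) r].

From mathcomp Require Import all_boot all_order all_algebra zify.
Import GRing.Theory Num.Theory.

(* An arithmetical structure with largest value c
   is obtained from any list t of n-1 positive entries <= c, containing 1,
   such that c divides sum t and every entry divides c + sum t.
   - If c < n, take n-c-1 copies of c and c copies of 1.
   - Otherwise fix k > 0, P = 2^k, and write c as a sum of N = n+1-P powers
     2^i with i <= k, one of them equal to 1; adding P-2 copies of c gives a
     list with total sum c * P, which every 2^i (i <= k) and c divide.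
   Such a writing exists whenever min_count k c <= N <= c, where min_count
   counts the summands of the greedy binary writing [binary_count] (plus a
   forced 1 when c is even): summands can always be split in two.  A bound
   on binary_count turns the numerical hypotheses of the theorem into
   min_count k c <= n+1-P.  In part (b) the prime is odd (p = 2 violates the
   bound), which saves one summand. *)

Lemma gcd_seq_dvd (r : seq nat) x : x \in r -> foldr gcdn 0 r %| x.
Proof.
elim: r => //= y t IH; rewrite in_cons => /orP[/eqP->|/IH]; first exact: dvdn_gcdl.
exact: dvdn_trans (dvdn_gcdr _ _).
Qed.

Lemma structure_of_tail n c (t : seq nat) : 0 < c -> 0 < n -> size t = n.-1 ->
  all (fun x => 0 < x <= c) t -> 1 \in t ->
  c %| sumn t -> all (fun x => x %| c + sumn t) t ->
  exists r, arith_struct_Kn n r /\ head 0 r = c.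
Proof.
move=> c_gt0 n_gt0 size_t t_bounded t_has1 c_dvd t_dvd.
have t_pos : all (fun x => 0 < x) t by apply: sub_all t_bounded => x /andP[].
have perm_t := permEl (perm_sort geq t).
exists (c :: sort geq t); split => //; split.
- by rewrite /= size_sort size_t prednK.
- by rewrite /= c_gt0 (perm_all _ perm_t).
- rewrite /= path_sortedE; last by move=> a b d /= ab bd; exact: leq_trans bd ab.
  rewrite sort_sorted; last by move=> a b; exact: leq_total.
  by rewrite (perm_all _ perm_t) andbT; apply: sub_all t_bounded => x /andP[].
- apply/eqP; rewrite -dvdn1; apply: gcd_seq_dvd.
  by rewrite in_cons (perm_mem perm_t) t_has1 orbT.
- rewrite [sumn _]/= (perm_sumn perm_t) /= (perm_all _ perm_t) t_dvd.
  by rewrite dvdn_addl // dvdnn.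
Qed.

Lemma small_structure n c : 0 < c -> c < n ->
  exists r, arith_struct_Kn n r /\ head 0 r = c.
Proof.
move=> c_gt0 c_lt_n.
have sum_t : sumn (nseq (n - c - 1) c ++ nseq c 1) = (n - c - 1) * c + c.
  by rewrite sumn_cat !sumn_nseq; lia.
apply: (@structure_of_tail n c (nseq (n - c - 1) c ++ nseq c 1)) => //.
- lia.
- rewrite size_cat !size_nseq; lia.
- by rewrite all_cat; apply/andP; split; apply/allP => x /nseqP[-> _]; lia.
- by rewrite mem_cat; apply/orP; right; apply/nseqP.
- by rewrite sum_t dvdn_add // dvdn_mull.
- rewrite sum_t; apply/allP => x; rewrite mem_cat => /orP[] /nseqP[-> _] //.
  by rewrite dvdn_add // dvdn_add // dvdn_mull.
Qed.

Definition pow2_sum (k c N : nat) : Prop :=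
  exists s : seq nat,
    [/\ size s = N, all (fun i => i <= k) s & sumn (map (expn 2) s) = c].

Lemma odd_pow2_sum_has1 (s : seq nat) : odd (sumn (map (expn 2) s)) -> 0 \in s.
Proof.
by elim: s => //= -[|i] t IH; rewrite oddD in_cons //= expnS oddM /=.
Qed.

(* While some summand exceeds 1, splitting 2^(j+1) = 2^j + 2^j adds one term. *)
Lemma pow2_split (k : nat) (s : seq nat) : all (fun i => i <= k) s ->
  size s < sumn (map (expn 2) s) ->
  exists s', [/\ size s' = (size s).+1, all (fun i => i <= k) s'
               & sumn (map (expn 2) s') = sumn (map (expn 2) s)].
Proof.
elim: s => [|[|j] t IH] //=.
  move=> t_le size_lt; rewrite expn0 in size_lt.
  have [|t' [size_t' t'_le sum_t']] := IH t_le; first lia.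
  by exists (0 :: t'); rewrite /= size_t' sum_t'.
move=> /andP[j_le t_le] _; exists (j :: j :: t); split => //=.
  by rewrite t_le (ltnW j_le).
by rewrite expnS; lia.
Qed.

Lemma pow2_sum_grow k c N M : pow2_sum k c N -> N <= M <= c -> pow2_sum k c M.
Proof.
move=> sumN /andP[/subnK <- M_le]; elim: (M - N) M_le => [|d IH] le_c.
  by rewrite add0n.
have [|s [size_s s_le sum_s]] := IH; first lia.
have [|s' [size_s' s'_le sum_s']] := @pow2_split k s s_le; first lia.
by exists s'; split; rewrite ?size_s' ?size_s ?sum_s' ?sum_s.
Qed.

Lemma pow2_sum_double k c N (b : bool) :
  pow2_sum k c N -> pow2_sum k.+1 (b + c.*2) (b + N).
Proof.
move=> [s [size_s s_le sum_s]]; exists (nseq b 0 ++ map succn s); split.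
- by rewrite size_cat size_nseq size_map size_s.
- by rewrite all_cat all_map; case: b => /=; exact: s_le.
- rewrite map_cat sumn_cat -map_comp -sum_s.
  have -> : forall t, sumn (map (expn 2 \o succn) t) = (sumn (map (expn 2) t)).*2.
    by elim=> //= i t ->; rewrite expnS doubleD; lia.
  by case: b.
Qed.

(* Greedy count: c %/ 2^k copies of 2^k plus the binary digits of c %% 2^k. *)
Fixpoint binary_count (k c : nat) : nat :=
  if k is k'.+1 then odd c + binary_count k' c./2 else c.

Lemma pow2_sum_binary k c : pow2_sum k c (binary_count k c).
Proof.
elim: k c => [|k IH] c /=.
  exists (nseq c 0); split; rewrite ?size_nseq //; first by elim: c.
  by elim: c => //= c ->; rewrite expn0.
by have := @pow2_sum_double k c./2 _ (odd c) (IH c./2); rewrite odd_double_half.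
Qed.

Lemma pow2_sum_interval k c N : binary_count k c <= N <= c -> pow2_sum k c N.
Proof. exact: pow2_sum_grow (pow2_sum_binary k c). Qed.

Lemma binary_count_bound k q r : r < 2 ^ k ->
  binary_count k (q * 2 ^ k + r) + (r < (2 ^ k).-1) <= q + k.
Proof.
elim: k q r => [|k IH] q r /=.
  by rewrite expn0 ltnS leqn0 => /eqP->; rewrite muln1 addn0.
rewrite expnS => r_lt.
have r_eq := odd_double_half r; have pos := expn_gt0 2 k.
have := IH q r./2 ltac:(lia).
have -> : q * (2 * 2 ^ k) + r = odd r + (q * 2 ^ k + r./2).*2 by lia.
rewrite oddD odd_double addbF half_bit_double.
by case: (odd r) r_eq; case: ltnP; case: ltnP => /=; lia.
Qed.

Lemma binary_count_fit k c T : c + 2 + (k + 2 ^ k) * 2 ^ k <= T * 2 ^ k ->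
  binary_count k c + 2 + 2 ^ k <= T.
Proof.
set P := 2 ^ k => fit; have P_gt0 : 0 < P := expn_gt0 2 k.
have c_eq := divn_eq c P; set q := c %/ P in c_eq *; set r := c %% P in c_eq *.
have := @binary_count_bound k q r (ltn_pmod c P_gt0); rewrite -/P -c_eq.
case: ltnP => [r_lt|r_ge] bound.
  have : (q + k + P) * P < T * P by nia.
  by rewrite ltn_pmul2r //; lia.
have : (q + 1 + k + P) * P < T * P by nia.
by rewrite ltn_pmul2r //; lia.
Qed.

(* Number of summands of the greedy writing of c containing a summand 1:
   for even c, the writing of c - 1 followed by 1. *)
Definition min_count (k c : nat) : nat :=
  if odd c then binary_count k c else (binary_count k c.-1).+1.

Lemma pow2_sum_with1 k c N : 0 < c -> min_count k c <= N <= c ->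
  exists s : seq nat, [/\ size s = N, all (fun i => i <= k) s,
    sumn (map (expn 2) s) = c & 0 \in s].
Proof.
rewrite /min_count => c_gt0; case: ifP => [c_odd|c_even] bounds.
  have [s [size_s s_le sum_s]] := @pow2_sum_interval k c N bounds.
  by exists s; split => //; apply: odd_pow2_sum_has1; rewrite sum_s.
have [|s [size_s s_le sum_s]] := @pow2_sum_interval k c.-1 N.-1; first lia.
exists (0 :: s); split => //=; first lia.
by rewrite sum_s expn0; lia.
Qed.

Lemma min_count_fit k c T : 0 < c -> c + 1 + (k + 2 ^ k) * 2 ^ k <= T * 2 ^ k ->
  min_count k c + 1 + 2 ^ k <= T.
Proof.
rewrite /min_count => c_gt0 fit; have := expn_gt0 2 k; case: ifP => _ P_gt0.
  by have := @binary_count_fit k c T.+1 ltac:(nia); lia.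
by have := @binary_count_fit k c.-1 T ltac:(lia); lia.
Qed.

Lemma min_count_fit_odd k c T : odd c -> c + 2 + (k + 2 ^ k) * 2 ^ k <= T * 2 ^ k ->
  min_count k c + 2 + 2 ^ k <= T.
Proof. by rewrite /min_count => ->; exact: binary_count_fit. Qed.

Lemma mem_le_sumn (t : seq nat) x : x \in t -> x <= sumn t.
Proof.
elim: t => //= y t IH; rewrite in_cons => /orP[/eqP->|/IH]; first exact: leq_addr.
by move/leq_trans; apply; rewrite leq_addl.
Qed.

(* c, then 2^k - 2 copies of c, then n + 1 - 2^k powers 2^i (i <= k) summing
   to c and containing 1: the total sum is c 2^k. *)
Lemma pow2_structure k n c (s : seq nat) : 0 < k -> 2 ^ k <= n.+1 ->
  size s = n.+1 - 2 ^ k -> all (fun i => i <= k) s ->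
  sumn (map (expn 2) s) = c -> 0 \in s ->
  exists r, arith_struct_Kn n r /\ head 0 r = c.
Proof.
set P := 2 ^ k => k_gt0 P_le size_s s_le sum_s s_has0.
have P_ge2 : 2 <= P by rewrite /P -{1}(expn1 2) leq_exp2l.
have pow_le i : i \in s -> 0 < 2 ^ i <= c.
  by move=> i_in; rewrite expn_gt0 -sum_s mem_le_sumn // map_f.
have c_gt0 : 0 < c by have /andP[] := pow_le 0 s_has0.
set t := nseq (P - 2) c ++ map (expn 2) s.
have sum_t : c + sumn t = c * P by rewrite sumn_cat sumn_nseq sum_s; nia.
apply: (@structure_of_tail n c t) => //.
- lia.
- by rewrite size_cat size_nseq size_map size_s; lia.
- rewrite /t all_cat all_map; apply/andP; split.
    by apply/allP => x /nseqP[-> _]; rewrite c_gt0 leqnn.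
  by apply/allP => i /pow_le.
- by rewrite /t mem_cat (map_f (expn 2) s_has0) orbT.
- by rewrite /t sumn_cat sumn_nseq sum_s dvdn_addl // dvdn_mulr.
- rewrite sum_t /t all_cat all_map; apply/andP; split.
    by apply/allP => x /nseqP[-> _]; rewrite dvdn_mulr.
  by apply/allP => i /(allP s_le) i_le; rewrite /= dvdn_mull // dvdn_exp2l.
Qed.

Lemma large_structure k n c : 0 < k -> 0 < c -> n <= c ->
  min_count k c + 2 ^ k <= n.+1 -> exists r, arith_struct_Kn n r /\ head 0 r = c.
Proof.
move=> k_gt0 c_gt0 n_le count_le; have P_gt0 := expn_gt0 2 k.
have [|s [size_s s_le sum_s s_has0]] := @pow2_sum_with1 k c (n.+1 - 2 ^ k) c_gt0.
  by apply/andP; split; lia.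
by apply: (@pow2_structure k n c s k_gt0 _ size_s s_le sum_s s_has0); lia.
Qed.

Local Open Scope ring_scope.

Theorem theorem2p1 (n : nat) (hn : (0 < n)%N) :
  (forall c : nat, (0 < c)%N ->
     (exists k : nat, (0 < k)%N /\
        (c%:Z <= (2 ^ k * n)%:Z - ((k + 2 ^ k)%:Z - 2) * (2 ^ k)%:Z - 1)) ->
     exists r : seq nat, arith_struct_Kn n r /\ head 0%N r = c)
  /\
  (forall p : nat, prime p ->
     (exists k : nat, (0 < k)%N /\
        (p%:Z <= (2 ^ k * n)%:Z - ((k + 2 ^ k)%:Z - 3) * (2 ^ k)%:Z - 3)) ->
     exists r : seq nat, arith_struct_Kn n r /\ head 0%N r = p).
Proof.
split=> [c c_gt0 [k [k_gt0 bound]] | p p_prime [k [k_gt0 bound]]].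
  have [c_lt_n|n_le_c] := ltnP c n; first exact: small_structure.
  apply: (@large_structure k n c k_gt0 c_gt0 n_le_c).
  have fit : (c + 1 + (k + 2 ^ k) * 2 ^ k <= (n + 2) * 2 ^ k)%N by nia.
  by have := @min_count_fit k c (n + 2) c_gt0 fit; lia.
have p_gt1 := prime_gt1 p_prime.
have [p_lt_n|n_le_p] := ltnP p n; first by apply: small_structure; lia.
have fit : (p + 3 + (k + 2 ^ k) * 2 ^ k <= (n + 3) * 2 ^ k)%N by nia.
have p_odd : odd p.
  have [p_eq2|//] := even_prime p_prime; move: fit; rewrite p_eq2 => fit2.
  have P_gt0 := expn_gt0 2 k; have n_le2 : (n <= 2)%N by rewrite -p_eq2.
  have : ((k + 2 ^ k) * 2 ^ k < 5 * 2 ^ k)%N by nia.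
  by rewrite ltn_pmul2r // => kP_lt5; nia.
apply: (@large_structure k n p k_gt0 _ n_le_p); first lia.
by have := @min_count_fit_odd k p (n + 3) p_odd ltac:(lia); lia.
Qed.
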